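(* Let $(A,\cdot,[\cdot,\cdot],\alpha)$ be a Hom-Poisson algebra with $\alpha$ invertible, and let $\omega\in\wedge^2A^*$ be nondegenerate (i.e. $\omega^\sharp:A\to A^*$, $\langle\omega^\sharp(x),y\rangle=\omega(x,y)$, is invertible) such that for all $x,y,z\in A$: $\omega(x\cdot y,\alpha(z))+\omega(y\cdot z,\alpha(x))+\omega(z\cdot x,\alpha(y))=0$, $\omega([x,y],\alpha(z))+\omega([y,z],\alpha(x))+\omega([z,x],\alpha(y))=0$, and $\omega(x,y)=\omega(\alpha(x),\alpha(y))$. Then there is a compatible Hom-pre-Poisson algebra structure $(A,\diamond,*,\alpha)$ on $A$ determined by $\omega(x\diamond y,z)=\omega(y,\alpha^{-1}(x)\cdot\alpha^{-2}(z))$ and $\omega(x*y,z)=-\omega(y,[\alpha^{-1}(x),\alpha^{-2}(z)])$ for all $x,y,z\in A$.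
   Context: A Hom-Poisson algebra $(A,\cdot,[\cdot,\cdot],\alpha)$: $(A,\cdot,\alpha)$ commutative Hom-associative (commutative product, $\alpha$ multiplicative, $\alpha(x)\cdot(y\cdot z)=(x\cdot y)\cdot\alpha(z)$), $(A,[\cdot,\cdot],\alpha)$ Hom-Lie (skew bracket, $\alpha$ multiplicative, $[\alpha x,[y,z]]+[\alpha y,[z,x]]+[\alpha z,[x,y]]=0$), and $[\alpha(x),y\cdot z]=[x,y]\cdot\alpha(z)+\alpha(y)\cdot[x,z]$. A Hom-pre-Poisson algebra $(A,\diamond,*,\alpha)$: $\alpha$ multiplicative for both products, $\alpha(x)\diamond(y\diamond z)=(x\diamond y)\diamond\alpha(z)+(y\diamond x)\diamond\alpha(z)$, $(x*y)*\alpha(z)-\alpha(x)*(y*z)=(y*x)*\alpha(z)-\alpha(y)*(x*z)$, $(x*y-y*x)\diamond\alpha(z)=\alpha(x)*(y\diamond z)-\alpha(y)\diamond(x*z)$, $(x\diamond y+y\diamond x)*\alpha(z)=\alpha(x)\diamond(y*z)+\alpha(y)\diamond(x*z)$. It is compatible with $(A,\cdot,[\cdot,\cdot],\alpha)$ if $x\cdot y=x\diamond y+y\diamond x$ and $[x,y]=x*y-y*x$. *)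

From mathcomp Require Import all_boot all_order all_algebra.
Set Implicit Arguments. Unset Strict Implicit. Unset Printing Implicit Defensive.
Import GRing.Theory.
Local Open Scope ring_scope.

Section HomDefs.
Variables (K : fieldType) (A : lmodType K).

Definition lin_map (f : A -> A) : Prop :=
  forall (a : K) (x y : A), f (a *: x + y) = a *: f x + f y.

Definition bilin_prod (m : A -> A -> A) : Prop :=
  (forall (a : K) (x y z : A), m (a *: x + y) z = a *: m x z + m y z) /\
  (forall (a : K) (x y z : A), m z (a *: x + y) = a *: m z x + m z y).

Definition bilin_form (w : A -> A -> K) : Prop :=
  (forall (a : K) (x y z : A), w (a *: x + y) z = a * w x z + w y z) /\
  (forall (a : K) (x y z : A), w z (a *: x + y) = a * w z x + w z y).

Definition lin_functional (f : A -> K) : Prop :=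
  forall (a : K) (x y : A), f (a *: x + y) = a * f x + f y.

Definition hp_two_form (w : A -> A -> K) : Prop :=
  bilin_form w /\ forall x, w x x = 0.

(** hp_nondegenerate: omega^sharp : A -> A^*, x |-> omega(x, .), is bijective
    onto the linear functionals on A *)
Definition hp_nondegenerate (w : A -> A -> K) : Prop :=
  forall f : A -> K, lin_functional f ->
    exists! x : A, forall y, w x y = f y.

Definition multiplicative (alpha : A -> A) (m : A -> A -> A) : Prop :=
  forall x y, alpha (m x y) = m (alpha x) (alpha y).

Definition hom_poisson (mul br : A -> A -> A) (alpha : A -> A) : Prop :=
  lin_map alpha /\ bilin_prod mul /\ bilin_prod br /\
      (forall x y, mul x y = mul y x) /\
      multiplicative alpha mul /\
      (forall x y z, mul (alpha x) (mul y z) = mul (mul x y) (alpha z)) /\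
      (forall x y, br x y = - br y x) /\
      multiplicative alpha br /\
      (forall x y z, br (alpha x) (br y z) + br (alpha y) (br z x)
                     + br (alpha z) (br x y) = 0) /\
      (forall x y z, br (alpha x) (mul y z)
                     = mul (br x y) (alpha z) + mul (alpha y) (br x z)).

Definition hom_pre_poisson (dm st : A -> A -> A) (alpha : A -> A) : Prop :=
  lin_map alpha /\ bilin_prod dm /\ bilin_prod st /\
      multiplicative alpha dm /\ multiplicative alpha st /\
      (forall x y z, dm (alpha x) (dm y z)
                     = dm (dm x y) (alpha z) + dm (dm y x) (alpha z)) /\
      (forall x y z, st (st x y) (alpha z) - st (alpha x) (st y z)
                     = st (st y x) (alpha z) - st (alpha y) (st x z)) /\
      (forall x y z, dm (st x y - st y x) (alpha z)
                     = st (alpha x) (dm y z) - dm (alpha y) (st x z)) /\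
      (forall x y z, st (dm x y + dm y x) (alpha z)
                     = dm (alpha x) (st y z) + dm (alpha y) (st x z)).

Definition compatible_pre (dm st mul br : A -> A -> A) : Prop :=
  (forall x y, mul x y = dm x y + dm y x) /\
  (forall x y, br x y = st x y - st y x).

End HomDefs.

(** The structure maps are the adjoints of left multiplications under the
    twisted pairing [(x, z) |-> w x (alpha^-2 z)]: the cyclicity of [w]
    splits [x . y] and [[x, y]] into the symmetric resp. antisymmetric parts
    of [dm] and [st], and each Hom-pre-Poisson identity, paired against an
    arbitrary [z] by nondegeneracy, becomes one of Hom-associativity, the
    Hom-Jacobi identity or the Hom-Leibniz rule evaluated at
    [alpha^-2 x, alpha^-2 y, alpha^-4 z]. *)
From mathcomp Require Import all_boot all_order all_algebra.
From mathcomp Require Import ring.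
From Stdlib Require Import IndefiniteDescription.
Set Implicit Arguments. Unset Strict Implicit.
Import GRing.Theory.
Local Open Scope ring_scope.

Lemma eq_by_sub_eq (R : zmodType) (l r g1 g2 : R) :
  l = r -> g1 - g2 = l - r -> g1 = g2.
Proof. by move=> -> h; apply/eqP; rewrite -subr_eq0 h subrr. Qed.

Section Bilinear.
Variables (K : fieldType) (A : lmodType K).

Section Product.
Variables (m : A -> A -> A) (mb : bilin_prod m).

Lemma bilin_prodDl x y z : m (x + y) z = m x z + m y z.
Proof. by have := mb.1 1 x y z; rewrite !scale1r. Qed.

Lemma bilin_prodNl x z : m (- x) z = - m x z.
Proof.
have m0 : m 0 z = 0 by apply: (addrI (m 0 z)); rewrite -bilin_prodDl !addr0.
by have := mb.1 (-1) x 0 z; rewrite addr0 m0 addr0 !scaleN1r.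
Qed.

Lemma bilin_prodNr x z : m z (- x) = - m z x.
Proof.
have m0 : m z 0 = 0.
  by apply: (addrI (m z 0)); have := mb.2 1 0 0 z; rewrite !scale1r !addr0.
by have := mb.2 (-1) x 0 z; rewrite addr0 m0 addr0 !scaleN1r.
Qed.

End Product.

Section Form.
Variables (w : A -> A -> K) (wb : bilin_form w).

Lemma bilin_formDl x y z : w (x + y) z = w x z + w y z.
Proof. by have := wb.1 1 x y z; rewrite scale1r mul1r. Qed.

Lemma bilin_formDr x y z : w z (x + y) = w z x + w z y.
Proof. by have := wb.2 1 x y z; rewrite scale1r mul1r. Qed.

Lemma bilin_form0r z : w z 0 = 0.
Proof. by apply: (addrI (w z 0)); rewrite -bilin_formDr !addr0. Qed.

Lemma bilin_form0l z : w 0 z = 0.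
Proof. by apply: (addrI (w 0 z)); rewrite -bilin_formDl !addr0. Qed.

Lemma bilin_formZl a x z : w (a *: x) z = a * w x z.
Proof. by have := wb.1 a x 0 z; rewrite addr0 bilin_form0l addr0. Qed.

Lemma bilin_formZr a x z : w z (a *: x) = a * w z x.
Proof. by have := wb.2 a x 0 z; rewrite addr0 bilin_form0r addr0. Qed.

Lemma bilin_formNl x z : w (- x) z = - w x z.
Proof. by rewrite -scaleN1r bilin_formZl mulN1r. Qed.

Lemma bilin_formNr x z : w z (- x) = - w z x.
Proof. by rewrite -scaleN1r bilin_formZr mulN1r. Qed.

Lemma bilin_formBl x y z : w (x - y) z = w x z - w y z.
Proof. by rewrite bilin_formDl bilin_formNl. Qed.

Lemma alternating_skew : (forall x, w x x = 0) -> forall x y, w x y = - w y x.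
Proof.
move=> walt x y; have := walt (x + y).
rewrite bilin_formDl !bilin_formDr !walt add0r addr0 => h.
by apply/eqP; rewrite -addr_eq0 h.
Qed.

Hypothesis wnd : hp_nondegenerate w.

Lemma nondegenerate_inj u v : (forall z, w u z = w v z) -> u = v.
Proof.
move=> uv; have [x [_ xE]] := @wnd (w v) (fun a s t => wb.2 a s t v).
by rewrite -(xE u uv) -(xE v (fun _ => erefl)).
Qed.

Lemma nondegenerate_represent_prod (f : A -> A -> A -> K) :
  (forall x y, lin_functional (f x y)) ->
  exists m : A -> A -> A, forall x y z, w (m x y) z = f x y z.
Proof.
move=> flin.
have rep x y : {u | forall z, w u z = f x y z}.
  apply: constructive_indefinite_description.
  by have [u [uE _]] := wnd (flin x y); exists u.
by exists (fun x y => sval (rep x y)) => x y; exact: (svalP (rep x y)).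
Qed.

End Form.
End Bilinear.

Section InverseMap.
Variables (K : fieldType) (A : lmodType K) (alpha alpha_inv : A -> A).
Hypotheses (alphaK : cancel alpha alpha_inv) (alpha_invK : cancel alpha_inv alpha).

Lemma lin_map_inverse : lin_map alpha -> lin_map alpha_inv.
Proof. by move=> alin a x y; apply: (can_inj alphaK); rewrite alin !alpha_invK. Qed.

Lemma multiplicative_inverse (m : A -> A -> A) :
  (forall x y, alpha (m x y) = m (alpha x) (alpha y)) ->
  forall x y, alpha_inv (m x y) = m (alpha_inv x) (alpha_inv y).
Proof. by move=> am x y; apply: (can_inj alphaK); rewrite am !alpha_invK. Qed.

End InverseMap.

Section Dual.
Variables (K : fieldType) (A : lmodType K).
Variables (mul br : A -> A -> A) (alpha alpha_inv : A -> A) (w : A -> A -> K).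

Hypotheses (alpha_lin : lin_map alpha) (mulb : bilin_prod mul)
  (brb : bilin_prod br) (mulC : forall x y, mul x y = mul y x)
  (alpha_mul : forall x y, alpha (mul x y) = mul (alpha x) (alpha y))
  (mul_hom_assoc : forall x y z, mul (alpha x) (mul y z) = mul (mul x y) (alpha z))
  (brC : forall x y, br x y = - br y x)
  (alpha_br : forall x y, alpha (br x y) = br (alpha x) (alpha y))
  (br_hom_jacobi : forall x y z, br (alpha x) (br y z) + br (alpha y) (br z x)
                                 + br (alpha z) (br x y) = 0)
  (br_hom_leibniz : forall x y z, br (alpha x) (mul y z)
                        = mul (br x y) (alpha z) + mul (alpha y) (br x z)).
Hypotheses (alphaK : cancel alpha alpha_inv) (alpha_invK : cancel alpha_inv alpha).
Hypotheses (wb : bilin_form w) (walt : forall x, w x x = 0)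
  (wnd : hp_nondegenerate w)
  (w_mul_cyclic : forall x y z, w (mul x y) (alpha z) + w (mul y z) (alpha x)
                                + w (mul z x) (alpha y) = 0)
  (w_br_cyclic : forall x y z, w (br x y) (alpha z) + w (br y z) (alpha x)
                               + w (br z x) (alpha y) = 0)
  (w_alpha : forall x y, w x y = w (alpha x) (alpha y)).

Local Notation b := alpha_inv.

Let wDl := bilin_formDl wb.
Let wDr := bilin_formDr wb.
Let wZl := bilin_formZl wb.
Let wZr := bilin_formZr wb.
Let wNl := bilin_formNl wb.
Let wNr := bilin_formNr wb.
Let wBl := bilin_formBl wb.
Let wskew := alternating_skew wb walt.
Let winj := nondegenerate_inj wb wnd.

Let alpha_inv_lin := lin_map_inverse alphaK alpha_invK alpha_lin.
Let alpha_inv_mul := multiplicative_inverse alphaK alpha_invK alpha_mul.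
Let alpha_inv_br := multiplicative_inverse alphaK alpha_invK alpha_br.

Lemma w_alpha_adjoint u v : w (alpha u) v = w u (b v).
Proof. by rewrite [RHS]w_alpha alpha_invK. Qed.

Lemma dual_mul_exists :
  exists dm : A -> A -> A,
    forall x y z, w (dm x y) z = w y (mul (b x) (b (b z))).
Proof.
apply: (nondegenerate_represent_prod wnd) => x y a s t.
by rewrite !alpha_inv_lin mulb.2 wb.2.
Qed.

Lemma dual_br_exists :
  exists st : A -> A -> A,
    forall x y z, w (st x y) z = - w y (br (b x) (b (b z))).
Proof.
apply: (nondegenerate_represent_prod wnd) => x y a s t.
by rewrite !alpha_inv_lin brb.2 wb.2 opprD mulrN.
Qed.

Variables (dm st : A -> A -> A).
Hypotheses (dmE : forall x y z, w (dm x y) z = w y (mul (b x) (b (b z))))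
  (stE : forall x y z, w (st x y) z = - w y (br (b x) (b (b z)))).

Lemma mul_dm_sym x y : mul x y = dm x y + dm y x.
Proof.
apply: winj => z; rewrite wDl !dmE.
have := w_mul_cyclic x y (b z).
rewrite alpha_invK [w (mul y _) _]wskew [w (mul (b z) x) _]wskew.
rewrite !w_alpha_adjoint !alpha_inv_mul [mul (b (b z)) _]mulC => h.
by apply: (eq_by_sub_eq h); ring.
Qed.

Lemma br_st_skew x y : br x y = st x y - st y x.
Proof.
apply: winj => z; rewrite wBl !stE.
have := w_br_cyclic x y (b z).
rewrite alpha_invK [w (br y _) _]wskew [w (br (b z) x) _]wskew.
rewrite !w_alpha_adjoint !alpha_inv_br [br (b (b z)) _]brC wNr => h.
by apply: (eq_by_sub_eq h); ring.
Qed.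

Lemma dm_bilin : bilin_prod dm.
Proof.
split=> a x y z; apply: winj => t; rewrite wDl wZl !dmE.
  by rewrite alpha_inv_lin mulb.1 wDr wZr.
by rewrite wDl wZl.
Qed.

Lemma st_bilin : bilin_prod st.
Proof.
split=> a x y z; apply: winj => t; rewrite wDl wZl !stE.
  by rewrite alpha_inv_lin brb.1 wDr wZr; ring.
by rewrite wDl wZl; ring.
Qed.

Lemma alpha_dm x y : alpha (dm x y) = dm (alpha x) (alpha y).
Proof.
by apply: winj => z; rewrite w_alpha_adjoint !dmE w_alpha_adjoint
  alphaK alpha_inv_mul.
Qed.

Lemma alpha_st x y : alpha (st x y) = st (alpha x) (alpha y).
Proof.
by apply: winj => z; rewrite w_alpha_adjoint !stE w_alpha_adjoint
  alphaK alpha_inv_br.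
Qed.

Lemma dm_mull x y z : dm (mul x y) (alpha z) = dm (alpha x) (dm y z).
Proof.
apply: winj => t; rewrite !dmE alphaK w_alpha_adjoint !alpha_inv_mul.
congr (w z _).
have := mul_hom_assoc (b (b y)) (b (b x)) (b (b (b (b t)))).
by rewrite !alpha_invK [mul (b (b y)) _]mulC.
Qed.

Lemma st_brl x y z :
  st (br x y) (alpha z) = st (alpha x) (st y z) - st (alpha y) (st x z).
Proof.
apply: winj => t; rewrite wBl !stE !alphaK w_alpha_adjoint !alpha_inv_br.
have := congr1 (w z) (br_hom_jacobi (b (b x)) (b (b y)) (b (b (b (b t))))).
rewrite !alpha_invK !wDr (bilin_form0r wb) [br (b (b (b (b t)))) _]brC.
rewrite [br (b (b (b t))) _]brC !(bilin_prodNr brb) !wNr => h.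
by apply: (eq_by_sub_eq h); ring.
Qed.

Lemma dm_brl x y z :
  dm (br x y) (alpha z) = st (alpha x) (dm y z) - dm (alpha y) (st x z).
Proof.
apply: winj => t; rewrite wBl !dmE !stE !dmE !alphaK w_alpha_adjoint.
rewrite !alpha_inv_mul !alpha_inv_br.
have := congr1 (w z) (br_hom_leibniz (b (b x)) (b (b y)) (b (b (b (b t))))).
by rewrite !alpha_invK wDr => ->; ring.
Qed.

Lemma st_mull x y z :
  st (mul x y) (alpha z) = dm (alpha x) (st y z) + dm (alpha y) (st x z).
Proof.
apply: winj => t; rewrite wDl !stE !dmE !stE !alphaK w_alpha_adjoint.
rewrite !alpha_inv_mul !alpha_inv_br !alpha_inv_mul.
(* Needs the Hom-Leibniz rule with each of [x], [y], [t] in the bracket slot. *)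
have := congr1 (w z) (br_hom_leibniz (b (b y)) (b (b x)) (b (b (b (b t))))).
rewrite !alpha_invK wDr [br (b (b y)) (b (b x))]brC (bilin_prodNl mulb) wNr.
move=> ->.
have := congr1 (w z) (br_hom_leibniz (b (b x)) (b (b y)) (b (b (b (b t))))).
rewrite !alpha_invK wDr => ->.
have := congr1 (w z) (br_hom_leibniz (b (b (b (b t)))) (b (b x)) (b (b y))).
rewrite !alpha_invK wDr [mul (br _ _) (b y)]mulC [br (b (b (b (b t)))) _]brC.
rewrite [br (b (b (b (b t)))) _]brC !(bilin_prodNr mulb) !wNr => leib_t.
by rewrite [br (mul _ _) _]brC wNr leib_t; ring.
Qed.

Lemma dm_st_hom_pre_poisson : hom_pre_poisson dm st alpha.
Proof.
split; [done | split; [exact: dm_bilin | split; [exact: st_bilin | ]]].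
split; [exact: alpha_dm | split; [exact: alpha_st | split]].
  by move=> x y z; rewrite -(bilin_prodDl dm_bilin) -mul_dm_sym dm_mull.
split.
  move=> x y z; apply: winj => t.
  have := congr1 (w^~ t) (st_brl x y z).
  rewrite br_st_skew (bilin_prodDl st_bilin) (bilin_prodNl st_bilin).
  rewrite !wDl !wNl => h.
  by apply: (eq_by_sub_eq h); ring.
split=> x y z; first by rewrite -br_st_skew dm_brl.
by rewrite -mul_dm_sym st_mull.
Qed.

End Dual.

Theorem theorem5p10 (K : fieldType) (A : lmodType K)
    (mul br : A -> A -> A) (alpha alpha_inv : A -> A)
    (w : A -> A -> K) :
  hom_poisson mul br alpha ->
  cancel alpha alpha_inv -> cancel alpha_inv alpha ->
  hp_two_form w -> hp_nondegenerate w ->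
  (forall x y z, w (mul x y) (alpha z) + w (mul y z) (alpha x)
                 + w (mul z x) (alpha y) = 0) ->
  (forall x y z, w (br x y) (alpha z) + w (br y z) (alpha x)
                 + w (br z x) (alpha y) = 0) ->
  (forall x y, w x y = w (alpha x) (alpha y)) ->
  exists dm st : A -> A -> A,
    [/\ (forall x y z,
           w (dm x y) z = w y (mul (alpha_inv x) (alpha_inv (alpha_inv z)))),
        (forall x y z,
           w (st x y) z = - w y (br (alpha_inv x) (alpha_inv (alpha_inv z)))),
        hom_pre_poisson dm st alpha &
        compatible_pre dm st mul br].
Proof.
move=> [alin [mulb [brb [mulC [amul [massoc [brC [abr [jac leib]]]]]]]]].
move=> alphaK alpha_invK [wb walt] wnd wmul wbr walpha.
have [dm dmE] := dual_mul_exists alin mulb alphaK alpha_invK wb wnd.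
have [st stE] := dual_br_exists alin brb alphaK alpha_invK wb wnd.
exists dm, st; split=> //.
- exact: (dm_st_hom_pre_poisson alin mulb brb mulC amul massoc brC abr jac leib
            alphaK alpha_invK wb walt wnd wmul wbr walpha dmE stE).
- split=> x y.
  + exact: (mul_dm_sym mulC amul alphaK alpha_invK wb walt wnd wmul walpha dmE).
  + exact: (br_st_skew brC abr alphaK alpha_invK wb walt wnd wbr walpha stE).
Qed.
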